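(* For all $n\geq1$ and all formulas $\phi,\chi_1,\dots,\chi_n\in\mathcal{L}(\nabla,\bullet)$, $$\vdash_{\mathbf{K}^{\nabla\bullet}}\Delta\Big(\bigwedge_{k=1}^n\chi_k\to\phi\Big)\land\bigwedge_{k=1}^n\Delta\chi_k\land\bigwedge_{k=1}^n\circ(\phi\to\chi_k)\to\phi\vee\Delta\phi.$$
   Context: $\mathcal{L}(\nabla,\bullet)$: $\phi::=p\mid\neg\phi\mid\phi\land\phi\mid\nabla\phi\mid\bullet\phi$ over a nonempty set of propositional variables; $\Delta\phi:=\neg\nabla\phi$, $\circ\phi:=\neg\bullet\phi$. The Hilbert system $\mathbf{K}^{\nabla\bullet}$ has axioms: A0 all instances of propositional tautologies; A1 $\bullet\phi\to\phi$; A2 $\nabla\phi\leftrightarrow\nabla\neg\phi$; A3 $\bullet(\psi\to\phi)\land\phi\to\bullet\phi$; A4 $\nabla(\phi\land\psi)\to\nabla\phi\vee\nabla\psi$; A5 $\bullet(\phi\land\psi)\to\bullet\phi\vee\bullet\psi$; A6 $\nabla\phi\to\bullet\phi\vee\bullet\neg\phi$; A7 $\bullet(\phi\to\psi)\land\bullet(\neg\phi\to\chi)\to\nabla\phi$; and rules: R1 from $\phi$ infer $\Delta\phi$; R2 from $\phi$ infer $\circ\phi$; R3 from $\phi\leftrightarrow\psi$ infer $\Delta\phi\leftrightarrow\Delta\psi$; R4 from $\phi\leftrightarrow\psi$ infer $\circ\phi\leftrightarrow\circ\psi$; MP. *)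

From Stdlib Require Import List.
Import ListNotations.

Inductive form : Type :=
| Var : nat -> form
| Neg : form -> form
| And : form -> form -> form
| Nab : form -> form
| Bul : form -> form.

Definition Or (a b : form) : form := Neg (And (Neg a) (Neg b)).
Definition Imp (a b : form) : form := Neg (And a (Neg b)).
Definition Iff (a b : form) : form := And (Imp a b) (Imp b a).
Definition Del (a : form) : form := Neg (Nab a).
Definition Circ (a : form) : form := Neg (Bul a).

Fixpoint peval (v : form -> bool) (f : form) : bool :=
  match f with
  | Var _ => v f
  | Neg a => negb (peval v a)
  | And a b => andb (peval v a) (peval v b)
  | Nab _ => v f
  | Bul _ => v f
  end.

(* f is an instance of a propositional tautology *)
Definition taut (f : form) : Prop := forall v : form -> bool, peval v f = true.

Inductive prov : form -> Prop :=
| A0 : forall f, taut f -> prov f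
| A1 : forall f, prov (Imp (Bul f) f)
| A2 : forall f, prov (Iff (Nab f) (Nab (Neg f)))
| A3 : forall f g, prov (Imp (And (Bul (Imp g f)) f) (Bul f))
| A4 : forall f g, prov (Imp (Nab (And f g)) (Or (Nab f) (Nab g)))
| A5 : forall f g, prov (Imp (Bul (And f g)) (Or (Bul f) (Bul g)))
| A6 : forall f, prov (Imp (Nab f) (Or (Bul f) (Bul (Neg f))))
| A7 : forall f g h, prov (Imp (And (Bul (Imp f g)) (Bul (Imp (Neg f) h))) (Nab f))
| R1 : forall f, prov f -> prov (Del f)
| R2 : forall f, prov f -> prov (Circ f)
| R3 : forall f g, prov (Iff f g) -> prov (Iff (Del f) (Del g))
| R4 : forall f g, prov (Iff f g) -> prov (Iff (Circ f) (Circ g))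
| MP : forall f g, prov (Imp f g) -> prov f -> prov g.

Fixpoint bigAnd (x : form) (xs : list form) : form :=
  match xs with
  | [] => x
  | y :: ys => And x (bigAnd y ys)
  end.

From Stdlib Require Import List.
Import ListNotations.

(* Write X for the conjunction of the chi_k.  Every Delta chi_k, together with
   circ (phi -> chi_k) and ~ phi, gives Delta (chi_k \/ phi): otherwise A6 and A1
   would make phi -> chi_k false, i.e. phi true.  Since Delta distributes over
   conjunctions (A4), these combine to Delta (X \/ phi).  Finally phi is
   equivalent to (X -> phi) /\ (X \/ phi), so Delta (X -> phi) and Delta (X \/ phi)
   yield Delta phi.  Hence either phi holds or Delta phi does. *)

(* The abbreviations are unfolded first so that convertible modal atoms become
   syntactically equal before the valuation is case-split on them. *)
Ltac tautcheck :=
  let v := fresh "v" in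
  unfold taut, Iff, Imp, Or, Del, Circ; intro v; simpl;
  repeat (match goal with
          | |- context [v ?x] => destruct (v x)
          | |- context [peval v ?x] => destruct (peval v x)
          end; simpl); reflexivity.

Lemma prov_and (a b : form) : prov a -> prov b -> prov (And a b).
Proof.
  intros Ha Hb.
  exact (MP _ _ (MP _ _ (A0 (Imp a (Imp b (And a b))) ltac:(tautcheck)) Ha) Hb).
Qed.

Lemma prov_taut_mp (a b : form) : taut (Imp a b) -> prov a -> prov b.
Proof. intros Hab Ha. exact (MP _ _ (A0 _ Hab) Ha). Qed.

Lemma Del_congr (a b : form) : taut (Iff a b) -> prov (Iff (Del a) (Del b)).
Proof. intro Hab. exact (R3 _ _ (A0 _ Hab)). Qed.

Lemma Del_neg (a : form) : prov (Iff (Del a) (Del (Neg a))).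
Proof. refine (prov_taut_mp _ _ _ (A2 a)); tautcheck. Qed.

Lemma Del_and (a b : form) : prov (Imp (And (Del a) (Del b)) (Del (And a b))).
Proof. refine (prov_taut_mp _ _ _ (A4 a b)); tautcheck. Qed.

Lemma Circ_Del (a : form) : prov (Imp (And (Circ a) a) (Del a)).
Proof.
  refine (prov_taut_mp _ _ _ (prov_and _ _ (A6 a) (A1 (Neg a)))).
  tautcheck.
Qed.

Lemma Del_or_of_Circ_imp (phi chi : form) :
  prov (Imp (And (Del chi) (And (Circ (Imp phi chi)) (Neg phi))) (Del (Or chi phi))).
Proof.
  pose proof (Circ_Del (Imp phi chi)) as circ_del.
  pose proof (Del_neg chi) as del_neg_chi.
  pose proof (Del_and (Neg chi) (Imp phi chi)) as del_and.
  pose proof (Del_congr (And (Neg chi) (Imp phi chi)) (And (Neg chi) (Neg phi))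
                ltac:(tautcheck)) as del_congr.
  pose proof (Del_neg (And (Neg chi) (Neg phi))) as del_neg_or.
  refine (prov_taut_mp _ _ _
    (prov_and _ _ circ_del (prov_and _ _ del_neg_chi (prov_and _ _ del_and
      (prov_and _ _ del_congr del_neg_or))))).
  tautcheck.
Qed.

Lemma Del_or_and (a b c : form) :
  prov (Imp (And (Del (Or a c)) (Del (Or b c))) (Del (Or (And a b) c))).
Proof.
  pose proof (Del_and (Or a c) (Or b c)) as del_and.
  pose proof (Del_congr (Or (And a b) c) (And (Or a c) (Or b c)) ltac:(tautcheck))
    as del_congr.
  refine (prov_taut_mp _ _ _ (prov_and _ _ del_and del_congr)).
  tautcheck.
Qed.

Lemma Del_bigAnd_or (phi chi1 : form) (chis : list form) :
  prov (Imp (And (bigAnd (Del chi1) (map Del chis))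
                 (And (bigAnd (Circ (Imp phi chi1)) (map (fun c => Circ (Imp phi c)) chis))
                      (Neg phi)))
            (Del (Or (bigAnd chi1 chis) phi))).
Proof.
  revert chi1; induction chis as [|chi2 chis IH]; intro chi1; simpl.
  - apply Del_or_of_Circ_imp.
  - pose proof (Del_or_of_Circ_imp phi chi1) as head.
    pose proof (Del_or_and chi1 (bigAnd chi2 chis) phi) as combine.
    refine (prov_taut_mp _ _ _ (prov_and _ _ (IH chi2) (prov_and _ _ head combine))).
    tautcheck.
Qed.

Lemma Del_of_Del_imp_Del_or (a b : form) :
  prov (Imp (And (Del (Imp a b)) (Del (Or a b))) (Del b)).
Proof.
  pose proof (Del_and (Imp a b) (Or a b)) as del_and.
  pose proof (Del_congr b (And (Imp a b) (Or a b)) ltac:(tautcheck)) as del_congr.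
  refine (prov_taut_mp _ _ _ (prov_and _ _ del_and del_congr)).
  tautcheck.
Qed.

Theorem proposition7 (phi chi1 : form) (chis : list form) :
  prov (Imp
          (And (Del (Imp (bigAnd chi1 chis) phi))
               (And (bigAnd (Del chi1) (map Del chis))
                    (bigAnd (Circ (Imp phi chi1)) (map (fun c => Circ (Imp phi c)) chis))))
          (Or phi (Del phi))).
Proof.
  pose proof (Del_bigAnd_or phi chi1 chis) as del_or.
  pose proof (Del_of_Del_imp_Del_or (bigAnd chi1 chis) phi) as del_phi.
  refine (prov_taut_mp _ _ _ (prov_and _ _ del_or del_phi)).
  tautcheck.
Qed.
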